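(* Let $(X,d^X)$ and $(Y,d^Y)$ be compact metric spaces, let $f$ be a homeomorphism of $X$, let $g$ be a homeomorphism of $Y$, and let $h:X\to Y$ be a homeomorphism. Then: (1) $U_f(X)=U_{f^{-1}}(X)$; (2) $U_{h\circ f\circ h^{-1}}(Y)=h(U_f(X))$; (3) for each $k\in\mathbb{Z}$, the set $U_{f^k}(X)$ is invariant under $f$; in particular $U_f(X)$ is invariant under $f$; (4) $U_{f\times g}(X\times Y)=U_f(X)\times U_g(Y)$, where $X\times Y$ carries the maximum metric $D((x_1,y_1),(x_2,y_2))=\max\{d^X(x_1,x_2),d^Y(y_1,y_2)\}$; (5) $M_f(X)=M_{f^{-1}}(X)$; (6) $M_{h\circ f\circ h^{-1}}(Y)=h(M_f(X))$; (7) for each $k\in\mathbb{Z}$, the set $M_{f^k}(X)$ is invariant under $f$; in particular $M_f(X)$ is invariant under $f$.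
   Context: For a homeomorphism $f$ of a compact metric space $(X,d)$: $B(x,\epsilon)=\{y: d(x,y)<\epsilon\}$ and $\mathcal{O}_f(x)=\{f^n(x):n\in\mathbb{Z}\}$. $f$ is expansive on a subset $A\subset X$ with expansivity constant $\mathfrak{c}>0$ if for every pair of distinct $x,y\in A$ there is $n\in\mathbb{Z}$ with $d(f^n(x),f^n(y))>\mathfrak{c}$. A point $x$ is a uniformly expansive point of $f$ if there is $\mathfrak{c}>0$ such that $f$ is expansive on $B(x,\mathfrak{c})$ with expansivity constant $\mathfrak{c}$; $U_f(X)$ denotes the set of uniformly expansive points of $f$. A point $x$ is a minimally expansive point of $f$ if there is $\mathfrak{c}>0$ such that for each $y\in B(x,\mathfrak{c})$, $f$ is expansive on $\overline{\mathcal{O}_f(y)}$ with expansivity constant $\mathfrak{c}$; $M_f(X)$ denotes the set of minimally expansive points of $f$. *)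

From HB Require Import structures.
From mathcomp Require Import all_boot all_order all_algebra.
From mathcomp Require Import all_classical all_reals all_analysis.
Set Implicit Arguments. Unset Strict Implicit. Unset Printing Implicit Defensive.
Import Order.TTheory GRing.Theory Num.Theory.
Local Open Scope classical_set_scope.
Local Open Scope ring_scope.

Section Defs.
Context {R : realType} {X : topologicalType}.

Definition homeo_pair {Y : topologicalType} (f : X -> Y) (finv : Y -> X) : Prop :=
  cancel f finv /\ cancel finv f /\ continuous f /\ continuous finv.

Definition iterz (f finv : X -> X) (n : int) : X -> X :=
  match n with
  | Posz k => iter k f
  | Negz k => iter k.+1 finv
  end.

Definition orbitz (f finv : X -> X) (x : X) : set X :=
  [set iterz f finv n x | n in [set: int]].

Definition dball (d : X -> X -> R) (x : X) (e : R) : set X := [set y | d x y < e].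

Definition expansive_on (d : X -> X -> R) (f finv : X -> X) (A : set X) (c : R) :=
  forall x y, A x -> A y -> x <> y ->
    exists n : int, c < d (iterz f finv n x) (iterz f finv n y).

Definition Uexp (d : X -> X -> R) (f finv : X -> X) : set X :=
  [set x | exists c : R, 0 < c /\ expansive_on d f finv (dball d x c) c].

Definition Mexp (d : X -> X -> R) (f finv : X -> X) : set X :=
  [set x | exists c : R, 0 < c /\
     forall y, dball d x c y -> expansive_on d f finv (closure (orbitz f finv y)) c].

End Defs.

Definition maxdist {R : realType} {X Y : metricType R} (p q : X * Y) : R :=
  Num.max (mdist p.1 q.1) (mdist p.2 q.2).

From HB Require Import structures.
From mathcomp Require Import all_boot all_order all_algebra.
From mathcomp Require Import all_classical all_reals all_analysis.
Set Implicit Arguments. Unset Strict Implicit. Unset Printing Implicit Defensive.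
Import Order.TTheory GRing.Theory Num.Theory.
Local Open Scope classical_set_scope.
Local Open Scope ring_scope.

(* The key fact is a pullback principle: if an injective, uniformly continuous
   map i intertwines two Z-actions, then points whose images are c-separated
   at some time are e-separated at that time, and e-balls map into c-balls, so
   i pulls uniformly expansive points back to uniformly expansive points; if i
   is also continuous it maps orbit closures into orbit closures, and the same
   holds for minimally expansive points.  By Heine-Cantor a homeomorphism of
   compact metric spaces is uniformly continuous both ways, so pulling back
   along h and h^-1 gives (2) and (6); (3) and (7) follow because f conjugates
   f^k to itself.  Passing to f^-1 only reverses time, giving (1) and (5).
   For (4), slices x |-> (x, y) are isometric for the max metric, and two
   distinct pairs differ in a coordinate that some iterate separates. *)

Section HeineCantor.
Context {R : realType}.

Lemma compact_unif_continuous (U V : pseudoMetricType R) (k : U -> V) :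
  compact [set: U] -> continuous k -> unif_continuous k.
Proof.
move=> cU ck; apply/unif_continuousP => c c0; apply: contrapT => nuc.
(* The sets of left ends of "bad" pairs at scale e generate a proper filter;
   continuity of k at one of its cluster points is contradictory. *)
pose bad e := [set a | exists2 b, ball a e b & ~ ball (k a) c (k b)].
have bad_ne e : 0 < e -> bad e !=set0.
  move=> e0; apply: contrapT => nbad; apply: nuc; exists e => // -[a b] /= ab.
  by apply: contrapT => kab; apply: nbad; exists a, b.
have bad_le e e' : e <= e' -> bad e `<=` bad e'.
  by move=> ee' a [b ab kab]; exists b => //; exact: le_ball ab.
pose F := filter_from [set e | 0 < e] bad.
have FF : ProperFilter F.
  apply: filter_from_proper; last by move=> e /bad_ne.
  apply: filter_from_filter; first by exists 1; rewrite /= ltr01.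
  move=> i j i0 j0; exists (Num.min i j); first by rewrite /= lt_min i0 j0.
  by move=> a bad_a; split; apply: bad_le bad_a; rewrite ge_min lexx ?orbT.
have [y [_ cly]] := cU F FF filterT.
have c2 : 0 < c / 2 by rewrite divr_gt0.
have /nbhs_ballP[d /= d0 kd] := ck y _ (nbhsx_ballx (k y) _ c2).
have d2 : 0 < d / 2 by rewrite divr_gt0.
have Fbad : F (bad (d / 2)) by exists (d / 2).
have [a [[b ab nkab] ya]] := cly _ _ Fbad (nbhsx_ballx y _ d2).
apply: nkab; apply: (@ball_splitr _ _ (k y)); apply: kd.
- by apply: le_ball ya; rewrite ler_pdivrMr// ler_pMr// ler1n.
- exact: ball_split ya ab.
Qed.

Lemma unif_continuous_mdist (X Y : metricType R) (k : X -> Y) :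
  unif_continuous k -> forall c, 0 < c ->
  exists2 e, 0 < e & forall a b, mdist a b <= e -> mdist (k a) (k b) < c.
Proof.
move=> /unif_continuousP kuc c c0; have [d d0 kd] := kuc c c0.
exists (d / 2) => [|a b ab]; first by rewrite divr_gt0.
have := kd (a, b); rewrite /= !ballEmdist; apply; apply: le_lt_trans ab _.
by rewrite ltr_pdivrMr// ltr_pMr// ltr1n.
Qed.

End HeineCantor.

Section Iterates.
Context {T : topologicalType}.

Lemma iterz_swap (f finv : T -> T) n x : iterz finv f n x = iterz f finv (- n) x.
Proof. by case: n => [[|k]|k]. Qed.

Lemma iterz_morph {U : topologicalType} (h : T -> U)
    (f finv : T -> T) (g ginv : U -> U) :
  {morph h : x / f x >-> g x} -> {morph h : x / finv x >-> ginv x} ->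
  forall n, {morph h : x / iterz f finv n x >-> iterz g ginv n x}.
Proof.
have iter_morph (a : T -> T) (b : U -> U) :
    {morph h : x / a x >-> b x} -> forall k, {morph h : x / iter k a x >-> iter k b x}.
  by move=> hab; elim=> // k IH x; rewrite /= hab IH.
by move=> hf hfinv [k|k] x; rewrite /iterz (iter_morph _ _ hf, iter_morph _ _ hfinv).
Qed.

Lemma iterz_conjK (f finv : T -> T) : cancel f finv -> cancel finv f ->
  forall n, f \o iterz f finv n \o finv = iterz f finv n.
Proof.
move=> fK fVK n; apply/funext => x /=.
have f_finv : {morph f : y / finv y} by move=> y; rewrite fK fVK.
by rewrite (iterz_morph (fun _ => erefl) f_finv) fVK.
Qed.

Lemma orbitz_swap (f finv : T -> T) x : orbitz finv f x = orbitz f finv x.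
Proof.
by apply/seteqP; split => _ [n _ <-]; exists (- n); rewrite // (iterz_swap f) ?opprK.
Qed.

Lemma orbitz_morph {U : topologicalType} (h : T -> U)
    (f finv : T -> T) (g ginv : U -> U) x :
  (forall n, {morph h : x / iterz f finv n x >-> iterz g ginv n x}) ->
  h @` orbitz f finv x `<=` orbitz g ginv (h x).
Proof. by move=> hmorph _ [_ [n _ <-] <-]; exists n; rewrite ?hmorph. Qed.

End Iterates.

Lemma closure_subset_preimage (T U : topologicalType) (h : T -> U) (A : set T) :
  continuous h -> closure A `<=` h @^-1` closure (h @` A).
Proof.
move=> hc x clAx B hxB; have [a [Aa Bha]] := clAx _ (hc x B hxB).
by exists (h a); split => //; exists a.
Qed.

Section Expansivity.
Context {R : realType} {T : topologicalType} (d : T -> T -> R).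

Lemma sub_expansive_on (f finv : T -> T) A B c :
  A `<=` B -> expansive_on d f finv B c -> expansive_on d f finv A c.
Proof. by move=> AB Bexp x y /AB Ax /AB Ay; exact: Bexp. Qed.

Lemma expansive_on_swap (f finv : T -> T) A c :
  expansive_on d f finv A c -> expansive_on d finv f A c.
Proof.
move=> fexp x y Ax Ay xy; have [n Hn] := fexp x y Ax Ay xy.
by exists (- n); rewrite !(iterz_swap f) opprK.
Qed.

Lemma Uexp_swap (f finv : T -> T) : Uexp d f finv = Uexp d finv f.
Proof.
suff sub f' finv' : Uexp d f' finv' `<=` Uexp d finv' f'.
  by apply/seteqP; split; apply: sub.
by move=> x [c [c0 fexp]]; exists c; split => //; exact: expansive_on_swap.
Qed.

Lemma Mexp_swap (f finv : T -> T) : Mexp d f finv = Mexp d finv f.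
Proof.
suff sub f' finv' : Mexp d f' finv' `<=` Mexp d finv' f'.
  by apply/seteqP; split; apply: sub.
move=> x [c [c0 fexp]]; exists c; split => // y xy.
by rewrite orbitz_swap; exact/expansive_on_swap/fexp.
Qed.

End Expansivity.

Section Pullback.
Context {R : realType} {S T : metricType R} (i : S -> T).
Context (f finv : S -> S) (F Finv : T -> T).
Hypothesis i_inj : injective i.
Hypothesis i_morph : forall n, {morph i : x / iterz f finv n x >-> iterz F Finv n x}.
Hypothesis i_uc : unif_continuous i.

Lemma expansive_on_pullback A c e :
  (forall a b, mdist a b <= e -> mdist (i a) (i b) < c) ->
  expansive_on mdist F Finv A c -> expansive_on mdist f finv (i @^-1` A) e.
Proof.
move=> ie Fexp x y Aix Aiy xy.
have [n cn] := Fexp _ _ Aix Aiy (contra_not (@i_inj x y) xy).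
exists n; rewrite ltNge; apply/negP => /ie.
by rewrite !i_morph ltNge (ltW cn).
Qed.

Lemma Uexp_pullback : i @^-1` Uexp mdist F Finv `<=` Uexp mdist f finv.
Proof.
move=> x [c [c0 Fexp]]; have [e e0 ie] := unif_continuous_mdist i_uc c0.
exists e; split => //; apply: sub_expansive_on (expansive_on_pullback ie Fexp).
by move=> y /ltW /ie.
Qed.

Hypothesis i_cont : continuous i.

Lemma Mexp_pullback : i @^-1` Mexp mdist F Finv `<=` Mexp mdist f finv.
Proof.
move=> x [c [c0 Fexp]]; have [e e0 ie] := unif_continuous_mdist i_uc c0.
exists e; split => // y /ltW /ie /Fexp /(expansive_on_pullback ie).
apply: sub_expansive_on; apply: subset_trans (closure_subset_preimage i_cont) _.
apply: preimage_subset; apply: closureS; exact: orbitz_morph.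
Qed.

End Pullback.

Section Conjugacy.
Context {R : realType} {X Y : metricType R} (h : X -> Y) (hinv : Y -> X).
Context (F Finv : X -> X).
Hypotheses (cX : compact [set: X]) (cY : compact [set: Y]) (hh : homeo_pair h hinv).

Local Notation G := (h \o F \o hinv).
Local Notation Ginv := (h \o Finv \o hinv).

Let h_morph n : {morph h : x / iterz F Finv n x >-> iterz G Ginv n x}.
Proof. by have [hK _] := hh; apply: iterz_morph => x /=; rewrite hK. Qed.

Let hinv_morph n : {morph hinv : y / iterz G Ginv n y >-> iterz F Finv n y}.
Proof. by have [hK _] := hh; apply: iterz_morph => y /=; rewrite hK. Qed.

Lemma Uexp_conj : Uexp mdist G Ginv = h @` Uexp mdist F Finv.
Proof.
have [hK [hVK [hc hVc]]] := hh; apply/seteqP; split => [y Uy | _ [x Ux <-]].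
- exists (hinv y); last exact: hVK.
  apply: (Uexp_pullback (can_inj hK) h_morph (compact_unif_continuous cX hc)).
  by rewrite /= hVK.
- apply: (Uexp_pullback (can_inj hVK) hinv_morph (compact_unif_continuous cY hVc)).
  by rewrite /= hK.
Qed.

Lemma Mexp_conj : Mexp mdist G Ginv = h @` Mexp mdist F Finv.
Proof.
have [hK [hVK [hc hVc]]] := hh; apply/seteqP; split => [y My | _ [x Mx <-]].
- exists (hinv y); last exact: hVK.
  apply: (Mexp_pullback (can_inj hK) h_morph (compact_unif_continuous cX hc) hc).
  by rewrite /= hVK.
- apply: (Mexp_pullback (can_inj hVK) hinv_morph (compact_unif_continuous cY hVc) hVc).
  by rewrite /= hK.
Qed.

End Conjugacy.

Section Product.
Context {R : realType} {X Y : metricType R} (f finv : X -> X) (g ginv : Y -> Y).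

Local Notation fg := (fun p : X * Y => (f p.1, g p.2)).
Local Notation fginv := (fun p : X * Y => (finv p.1, ginv p.2)).

Lemma iterz_prod n p : iterz fg fginv n p = (iterz f finv n p.1, iterz g ginv n p.2).
Proof.
by rewrite [LHS]surjective_pairing (@iterz_morph _ _ fst _ _ f finv) //
  (@iterz_morph _ _ snd _ _ g ginv).
Qed.

Lemma maxdist_pairl (y : Y) (a b : X) : maxdist (a, y) (b, y) = mdist a b.
Proof. by rewrite /maxdist /= mdistxx; apply/max_idPl/mdist_ge0. Qed.

Lemma maxdist_pairr (x : X) (a b : Y) : maxdist (x, a) (x, b) = mdist a b.
Proof. by rewrite /maxdist /= mdistxx; apply/max_idPr/mdist_ge0. Qed.

Lemma Uexp_prod_fst x y : Uexp maxdist fg fginv (x, y) -> Uexp mdist f finv x.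
Proof.
move=> [c [c0 fgexp]]; exists c; split => // a b xa xb ab.
have ya : dball maxdist (x, y) c (a, y) by rewrite /dball/= maxdist_pairl.
have yb : dball maxdist (x, y) c (b, y) by rewrite /dball/= maxdist_pairl.
have [n] := fgexp _ _ ya yb (fun e => ab (congr1 fst e)).
by rewrite !iterz_prod maxdist_pairl; exists n.
Qed.

Lemma Uexp_prod_snd x y : Uexp maxdist fg fginv (x, y) -> Uexp mdist g ginv y.
Proof.
move=> [c [c0 fgexp]]; exists c; split => // a b ya yb ab.
have xa : dball maxdist (x, y) c (x, a) by rewrite /dball/= maxdist_pairr.
have xb : dball maxdist (x, y) c (x, b) by rewrite /dball/= maxdist_pairr.
have [n] := fgexp _ _ xa xb (fun e => ab (congr1 snd e)).
by rewrite !iterz_prod maxdist_pairr; exists n.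
Qed.

Lemma Uexp_prod_pair x y :
  Uexp mdist f finv x -> Uexp mdist g ginv y -> Uexp maxdist fg fginv (x, y).
Proof.
move=> [c [c0 fexp]] [c' [c'0 gexp]].
exists (Num.min c c'); split => [|[a1 b1] [a2 b2]]; first by rewrite lt_min c0 c'0.
rewrite /dball /maxdist /= !gt_max !lt_min.
move=> /andP[/andP[xa1 _] /andP[_ yb1]] /andP[/andP[xa2 _] /andP[_ yb2]] neq.
have [a12|a12] := pselect (a1 = a2).
- have b12 : b1 <> b2 by move=> b12; apply: neq; rewrite a12 b12.
  have [n cn] := gexp b1 b2 yb1 yb2 b12.
  exists n; rewrite !iterz_prod /maxdist /= lt_max; apply/orP; right.
  by apply: le_lt_trans cn; rewrite ge_min lexx orbT.
- have [n cn] := fexp a1 a2 xa1 xa2 a12.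
  exists n; rewrite !iterz_prod /maxdist /= lt_max; apply/orP; left.
  by apply: le_lt_trans cn; rewrite ge_min lexx.
Qed.

Lemma Uexp_prod : Uexp maxdist fg fginv = Uexp mdist f finv `*` Uexp mdist g ginv.
Proof.
apply/seteqP; split => [[x y] Uxy | [x y] [Ux Uy]]; last exact: Uexp_prod_pair.
by split; [exact: Uexp_prod_fst Uxy | exact: Uexp_prod_snd Uxy].
Qed.

End Product.

Section Invariance.
Context {R : realType} {X : metricType R} (f finv : X -> X).
Hypotheses (cX : compact [set: X]) (hf : homeo_pair f finv).

Lemma Uexp_iterz_image k :
  f @` Uexp mdist (iterz f finv k) (iterz f finv (- k)) =
  Uexp mdist (iterz f finv k) (iterz f finv (- k)).
Proof.
have [fK [fVK _]] := hf.
by rewrite -(Uexp_conj (iterz f finv k) (iterz f finv (- k)) cX cX hf)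
  !iterz_conjK.
Qed.

Lemma Mexp_iterz_image k :
  f @` Mexp mdist (iterz f finv k) (iterz f finv (- k)) =
  Mexp mdist (iterz f finv k) (iterz f finv (- k)).
Proof.
have [fK [fVK _]] := hf.
by rewrite -(Mexp_conj (iterz f finv k) (iterz f finv (- k)) cX cX hf)
  !iterz_conjK.
Qed.

End Invariance.

Theorem proposition2p2 (R : realType) (X Y : metricType R)
  (f finv : X -> X) (g ginv : Y -> Y) (h : X -> Y) (hinv : Y -> X) :
  compact [set: X] -> compact [set: Y] ->
  homeo_pair f finv -> homeo_pair g ginv -> homeo_pair h hinv ->
  (* (1) *)
  Uexp mdist f finv = Uexp mdist finv f /\
  (* (2) *)
  Uexp mdist (h \o f \o hinv) (h \o finv \o hinv) = h @` Uexp mdist f finv /\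
  (* (3) *)
  (forall k : int,
     f @` Uexp mdist (iterz f finv k) (iterz f finv (- k)) =
     Uexp mdist (iterz f finv k) (iterz f finv (- k))) /\
  f @` Uexp mdist f finv = Uexp mdist f finv /\
  (* (4) *)
  Uexp maxdist (fun p : X * Y => (f p.1, g p.2)) (fun p : X * Y => (finv p.1, ginv p.2))
    = Uexp mdist f finv `*` Uexp mdist g ginv /\
  (* (5) *)
  Mexp mdist f finv = Mexp mdist finv f /\
  (* (6) *)
  Mexp mdist (h \o f \o hinv) (h \o finv \o hinv) = h @` Mexp mdist f finv /\
  (* (7) *)
  (forall k : int,
     f @` Mexp mdist (iterz f finv k) (iterz f finv (- k)) =
     Mexp mdist (iterz f finv k) (iterz f finv (- k))) /\
  f @` Mexp mdist f finv = Mexp mdist f finv.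
Proof.
move=> cX cY hf _ hh.
split; first exact: Uexp_swap.
split; first exact: Uexp_conj.
split; first exact: Uexp_iterz_image.
split; first exact: (Uexp_iterz_image cX hf 1).
split; first exact: Uexp_prod.
split; first exact: Mexp_swap.
split; first exact: Mexp_conj.
by split; [exact: Mexp_iterz_image | exact: (Mexp_iterz_image cX hf 1)].
Qed.
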